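(* Let $G$ be a finite simple graph and let $u,v\in V(G)$ with $uv\in E(G)$. Suppose that $\hat{E}_{u,v}=\emptyset$, where $\hat{E}_{u,v}=\{xy\in E(G): x\in N_G(u,\bar{v}),\ y\in N_G(\bar{u},v)\}$. Then $\mathbf{a}_4(G)\ge \mathbf{a}_4(G_{u\rightarrow v})$, and the inequality is strict if $N_G(\bar{u},v)\neq\emptyset$ and $N_G(u,\bar{v})\neq\emptyset$.
   Context: For a graph $G$ on $n$ vertices with adjacency matrix $\mathbf{A}(G)$, write $\det(\lambda \mathbf{I}-\mathbf{A}(G))=\sum_{i=0}^n \mathbf{a}_i(G)\lambda^{n-i}$; $\mathbf{a}_4(G)$ is the fourth adjacency coefficient (equivalently, $\mathbf{a}_4(G)$ equals the number of 2-matchings of $G$ minus twice the number of 4-cycles of $G$). For $u,v\in V(G)$: $N_G(u,\bar{v})=\{x\in V(G)\setminus\{u,v\}: xu\in E(G),\ xv\notin E(G)\}$ and $N_G(\bar{u},v)=\{x\in V(G)\setminus\{u,v\}: xv\in E(G),\ xu\notin E(G)\}$. The compression $G_{u\rightarrow v}$ is the graph obtained from $G$ by deleting all edges between $u$ and $N_G(u,\bar{v})$ and adding all edges between $v$ and $N_G(u,\bar{v})$. *)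

From mathcomp Require Import all_boot all_order all_algebra.
Set Implicit Arguments. Unset Strict Implicit. Unset Printing Implicit Defensive.
Import GRing.Theory Num.Theory.
Local Open Scope ring_scope.

Definition simple_graph (n : nat) (e : rel 'I_n) : Prop :=
  symmetric e /\ irreflexive e.

Definition adjmx (n : nat) (e : rel 'I_n) : 'M[int]_n :=
  \matrix_(i, j) (e i j)%:R.

(* det(lambda I - A) = sum_i a_i lambda^(n-i); a_4 is the coefficient of
   lambda^(n-4) of the characteristic polynomial (0 when n < 4). *)
Definition a4 (n : nat) (e : rel 'I_n) : int :=
  if (4 <= n)%N then (char_poly (adjmx e))`_(n - 4) else 0.

Definition Nbar (n : nat) (e : rel 'I_n) (u v : 'I_n) : {set 'I_n} :=
  [set x | (x != u) && (x != v) && e x u && ~~ e x v].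

(* The compression G_{u -> v}: delete all edges between u and N_G(u,\bar v),
   add all edges between v and N_G(u,\bar v). *)
Definition compress (n : nat) (e : rel 'I_n) (u v : 'I_n) : rel 'I_n :=
  fun x y =>
    let N := Nbar e u v in
    [|| e x y && ~~ (((x == u) && (y \in N)) || ((y == u) && (x \in N))),
        (x == v) && (y \in N)
      | (y == v) && (x \in N)].

(* For a symmetric matrix A with eigenvalues l_i we have det(X - A) = prod (X - l_i)
   and tr A^k = sum l_i^k, so Newton's identities give
   24 a_4 = (tr A)^4 - 6 (tr A)^2 tr A^2 + 3 (tr A^2)^2 + 8 tr A tr A^3 - 6 tr A^4.
   For a simple graph tr A = 0, tr A^2 = 2|E| and tr A^4 = sum_(a,c) w(a,c)^2, where
   w(a,c) is the number of common neighbours of a and c; hence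
   4 a_4 = 2|E|^2 - sum_(a,c) w(a,c)^2.
   Compression keeps |E| and does not decrease w(a,c) for a, c outside {u, v}.
   Since no edge joins N(u,\bar v) to N(\bar u,v), the sum of squares also does not
   decrease along each row (and column) of u and v, and on the 2x2 block at {u, v}
   it grows by exactly 2 |N(u,\bar v)| |N(\bar u,v)|.  Thus
   2 (a_4(G) - a_4(G_{u->v})) >= |N(u,\bar v)| |N(\bar u,v)|. *)

From mathcomp Require Import all_boot all_order all_algebra.
From mathcomp Require Import algC ring zify.
Set Implicit Arguments. Unset Strict Implicit. Unset Printing Implicit Defensive.
Import GRing.Theory Num.Theory.
Local Open Scope ring_scope.

Section ElementarySymmetric.
Variable R : comNzRingType.

Fixpoint elem_sym (l : seq R) (k : nat) : R :=
  match l, k with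
  | [::], _ => (k == 0%N)%:R
  | _, 0%N => 1
  | x :: l', k'.+1 => elem_sym l' k + x * elem_sym l' k'
  end.

Definition pow_sum (l : seq R) (k : nat) : R := \sum_(x <- l) x ^+ k.

Lemma elem_sym0 l : elem_sym l 0 = 1. Proof. by case: l. Qed.

Lemma elem_sym_gt_size l k : (size l < k)%N -> elem_sym l k = 0.
Proof.
elim: l k => [|x l IH] [|k] //= lt_lk.
by rewrite !IH ?mulr0 ?addr0 // ltnW.
Qed.

Lemma coef_prod_XsubC_elem_sym l j : (\prod_(x <- l) ('X - x%:P))`_j =
  if (j <= size l)%N then (-1) ^+ (size l - j) * elem_sym l (size l - j) else 0.
Proof.
elim: l j => [|x l IH] j.
  by rewrite big_nil coef1; case: j => [|j]; rewrite ?expr0 ?mul1r.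
rewrite big_cons mulrBl coefB coefXM coefCM /=.
case: j => [|j] /=.
  by rewrite IH leq0n !subn0 exprS (@elem_sym_gt_size l (size l).+1) //; ring.
rewrite !IH ltnS subSS; case: (ltngtP j (size l)) => [lt_jl|//|->].
- by rewrite -subnSK // exprS; ring.
- by rewrite mulr0 subr0.
- by rewrite subnn elem_sym0 mulr0 subr0.
Qed.

Lemma newton_identities4 l :
  [/\ elem_sym l 1 = pow_sum l 1,
      2 * elem_sym l 2 = pow_sum l 1 ^+ 2 - pow_sum l 2,
      6 * elem_sym l 3 = pow_sum l 1 ^+ 3 - 3 * pow_sum l 1 * pow_sum l 2
                         + 2 * pow_sum l 3 &
      24 * elem_sym l 4 = pow_sum l 1 ^+ 4 - 6 * pow_sum l 1 ^+ 2 * pow_sum l 2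
                          + 3 * pow_sum l 2 ^+ 2 + 8 * pow_sum l 1 * pow_sum l 3
                          - 6 * pow_sum l 4].
Proof.
elim: l => [|x l [IH1 IH2 IH3 IH4]].
  by rewrite /pow_sum !big_nil; split; rewrite ?expr0n ?mulr0 ?subr0 ?addr0.
rewrite /pow_sum !big_cons -!/(pow_sum l _) /= elem_sym0; split.
- by rewrite IH1; ring.
- have -> : 2 * (elem_sym l 2 + x * elem_sym l 1) =
            2 * elem_sym l 2 + 2 * x * elem_sym l 1 by ring.
  by rewrite IH2 IH1; ring.
- have -> : 6 * (elem_sym l 3 + x * elem_sym l 2) =
            6 * elem_sym l 3 + 3 * x * (2 * elem_sym l 2) by ring.
  by rewrite IH3 IH2; ring.
- have -> : 24 * (elem_sym l 4 + x * elem_sym l 3) =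
            24 * elem_sym l 4 + 4 * x * (6 * elem_sym l 3) by ring.
  by rewrite IH4 IH3; ring.
Qed.

End ElementarySymmetric.

Lemma char_poly_similar (F : fieldType) n (P D : 'M[F]_n) : P \in unitmx ->
  char_poly (invmx P *m D *m P) = char_poly D.
Proof.
move=> Pu; rewrite /char_poly /char_poly_mx.
have -> : 'X%:M - map_mx polyC (invmx P *m D *m P) =
    map_mx polyC (invmx P) *m ('X%:M - map_mx polyC D) *m map_mx polyC P.
  rewrite mulmxBr mulmxBl !map_mxM scalar_mxC -[_%:M *m _ *m _]mulmxA.
  have -> : map_mx polyC (invmx P) *m map_mx polyC P = 1%:M.
    by rewrite -map_mxM mulVmx // map_mx1.
  by rewrite mulmx1.
rewrite !det_mulmx !det_map_mx mulrAC -rmorphM -det_mulmx mulVmx //.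
by rewrite det1 rmorph1 mul1r.
Qed.

Lemma similar_exp (F : fieldType) n (P D : 'M[F]_n) k : P \in unitmx ->
  (invmx P *m D *m P) ^+ k = invmx P *m D ^+ k *m P.
Proof.
move=> Pu; elim: k => [|k IH]; first by rewrite !expr0 mulmx1 mulVmx.
rewrite !exprS IH -!mulmxE !mulmxA -[invmx P *m D *m P *m invmx P]mulmxA.
by rewrite mulmxV // mulmx1.
Qed.

Lemma diag_mx_exp (R : pzRingType) n (d : 'rV[R]_n) k :
  diag_mx d ^+ k = diag_mx (\row_i (d 0 i ^+ k)).
Proof.
elim: k => [|k IH]; first by apply/matrixP => i j; rewrite !mxE expr0.
rewrite exprSr IH -mulmxE mul_diag_mx; apply/matrixP => i j.
by rewrite !mxE mulrnAr exprSr.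
Qed.

Lemma normalmx_char_poly_coef4 (C : numClosedFieldType) n (A : 'M[C]_n) :
  A \is normalmx -> (4 <= n)%N ->
  24 * (char_poly A)`_(n - 4) =
    \tr A ^+ 4 - 6 * \tr A ^+ 2 * \tr (A ^+ 2) + 3 * \tr (A ^+ 2) ^+ 2
    + 8 * \tr A * \tr (A ^+ 3) - 6 * \tr (A ^+ 4).
Proof.
move=> /orthomx_spectralP defA n_ge4.
set P := spectralmx A in defA; set d := spectral_diag A in defA.
have Pu : P \in unitmx by apply: spectral_unit.
pose l := [seq d 0 i | i <- enum 'I_n].
have size_l : size l = n by rewrite size_map size_enum_ord.
have char_polyA : char_poly A = \prod_(x <- l) ('X - x%:P).
  rewrite defA char_poly_similar // char_poly_trig ?diag_mx_is_trig //.
  by rewrite big_map big_enum; apply: eq_bigr => i _; rewrite mxE eqxx mulr1n.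
have trA k : \tr (A ^+ k) = pow_sum l k.
  rewrite defA similar_exp // mxtrace_mulC mulmxA mulmxV // mul1mx.
  rewrite diag_mx_exp mxtrace_diag /pow_sum big_map big_enum.
  by apply: eq_bigr => i _; rewrite mxE.
have [_ _ _ newton4] := newton_identities4 l.
have trA1 : \tr A = pow_sum l 1 by rewrite -trA expr1.
rewrite trA1 !trA char_polyA coef_prod_XsubC_elem_sym size_l leq_subr.
by rewrite subKn // -newton4 -signr_odd expr0 mul1r.
Qed.

Lemma symmetric_int_char_poly_coef4 n (A : 'M[int]_n) : A^T = A -> (4 <= n)%N ->
  24 * (char_poly A)`_(n - 4) =
    \tr A ^+ 4 - 6 * \tr A ^+ 2 * \tr (A ^+ 2) + 3 * \tr (A ^+ 2) ^+ 2
    + 8 * \tr A * \tr (A ^+ 3) - 6 * \tr (A ^+ 4).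
Proof.
move=> symA n_ge4; apply: (@intr_inj algC).
pose B := map_mx (intr : int -> algC) A.
have expB k : B ^+ k = map_mx intr (A ^+ k).
  elim: k => [|k IH]; first by rewrite !expr0 -!idmxE map_mx1.
  by rewrite !exprS IH -!mulmxE map_mxM.
have trB k : (\tr (A ^+ k))%:~R = \tr (B ^+ k) :> algC.
  by rewrite expB /mxtrace rmorph_sum; apply: eq_bigr => i _; rewrite mxE.
have normB : B \is normalmx.
  apply: symmetric_normalmx; last by apply/mxOverP => i j; rewrite mxE realz.
  apply/is_hermitianmxP; rewrite expr0 scale1r; apply/matrixP => i j.
  by rewrite !mxE -[in RHS]symA mxE.
have trB1 : (\tr A)%:~R = \tr (B ^+ 1) :> algC by rewrite -trB expr1.
rewrite ?(rmorph_nat, intrM, rmorphXn, intrB, intrD) trB1 !trB.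
by rewrite -coef_map map_char_poly normalmx_char_poly_coef4 // expr1; ring.
Qed.

Definition walks2 n (f : rel 'I_n) (a c : 'I_n) : nat := (\sum_b f a b * f b c)%N.
Definition closed_walks2 n (f : rel 'I_n) : nat := (\sum_a \sum_b f a b)%N.
Definition closed_walks4 n (f : rel 'I_n) : nat := (\sum_a \sum_c walks2 f a c ^ 2)%N.

Section AdjacencyTraces.
Variables (n : nat) (f : rel 'I_n).
Hypothesis fsym : symmetric f.

Lemma walks2C a c : walks2 f a c = walks2 f c a.
Proof. by apply: eq_bigr => b _; rewrite mulnC (fsym a b) (fsym b c). Qed.

Lemma adjmx_tr : (adjmx f)^T = adjmx f.
Proof. by apply/matrixP => i j; rewrite !mxE fsym. Qed.

Lemma adjmx_sqr : adjmx f ^+ 2 = \matrix_(i, k) (walks2 f i k)%:R.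
Proof.
apply/matrixP => i k; rewrite expr2 -mulmxE !mxE /walks2 natr_sum.
by apply: eq_bigr => j _; rewrite !mxE natrM.
Qed.

Lemma mxtrace_adjmx : irreflexive f -> \tr (adjmx f) = 0.
Proof. by move=> firr; rewrite /mxtrace big1 // => i _; rewrite mxE firr. Qed.

Lemma mxtrace_adjmx_sqr : \tr (adjmx f ^+ 2) = (closed_walks2 f)%:R.
Proof.
rewrite adjmx_sqr /mxtrace /closed_walks2 natr_sum; apply: eq_bigr => i _.
rewrite mxE /walks2; congr _%:R; apply: eq_bigr => j _.
by rewrite (fsym j i); case: (f i j).
Qed.

Lemma mxtrace_adjmx_exp4 : \tr (adjmx f ^+ 4) = (closed_walks4 f)%:R.
Proof.
rewrite (_ : 4 = 2 + 2)%N // exprD adjmx_sqr -mulmxE /mxtrace /closed_walks4 natr_sum.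
apply: eq_bigr => i _; rewrite !mxE natr_sum; apply: eq_bigr => k _.
by rewrite !mxE walks2C natrX.
Qed.

End AdjacencyTraces.

Lemma a4_closed_walks n (f : rel 'I_n) : simple_graph f -> (4 <= n)%N ->
  24 * a4 f = 3 * (closed_walks2 f)%:R ^+ 2 - 6 * (closed_walks4 f)%:R.
Proof.
move=> [fsym firr] n_ge4; rewrite /a4 n_ge4 symmetric_int_char_poly_coef4 ?adjmx_tr //.
by rewrite mxtrace_adjmx // mxtrace_adjmx_sqr // mxtrace_adjmx_exp4 //; ring.
Qed.

Lemma walks_through_pair_le (au av cu cv : bool) :
  (au * cu + av * cv <= (au && av) * (cu && cv) + (au || av) * (cu || cv))%N.
Proof. by case: au; case: av; case: cu; case: cv. Qed.

(* x, y: adjacency of c to u, v; a, p, k: walks from c to u or v through common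
   neighbours of u and v, through N(u,\bar v) and through N(\bar u,v). *)
Lemma sqr_walks_row_le (x y : bool) (a p k : nat) :
  (x && ~~ y -> k = 0) -> (~~ x && y -> p = 0) ->
  ((y + (a + p)) ^ 2 + (x + (a + k)) ^ 2
     <= ((x || y) + a) ^ 2 + ((x && y) + (a + p + k)) ^ 2)%N.
Proof.
case: x; case: y => /= k0 p0; [nia | rewrite k0 //; nia | rewrite p0 //; nia | nia].
Qed.

Section Compression.
Variables (n : nat) (e : rel 'I_n) (u v : 'I_n).
Hypotheses (esym : symmetric e) (eirr : irreflexive e) (euv : e u v).

Local Notation e' := (compress e u v).
Local Notation outside b := ((b != u) && (b != v)).

Lemma neq_uv : u != v.
Proof. by apply: contraTneq euv => ->; rewrite eirr. Qed.

Lemma sum_split_uv (F : 'I_n -> nat) :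
  (\sum_b F b = F u + F v + \sum_(b | outside b) F b)%N.
Proof.
rewrite (bigD1 u) //= (bigD1 v) /=; last by rewrite eq_sym neq_uv.
by rewrite addnA.
Qed.

Lemma sum2_split_uv (F : 'I_n -> 'I_n -> nat) :
  (\sum_a \sum_c F a c = F u u + F u v + F v u + F v v
     + \sum_(c | outside c) (F u c + F v c) + \sum_(a | outside a) (F a u + F a v)
     + \sum_(a | outside a) \sum_(c | outside c) F a c)%N.
Proof.
under eq_bigr => a _ do rewrite (sum_split_uv (F a)).
rewrite sum_split_uv !big_split /=; lia.
Qed.

Lemma compress_outside a b : outside a -> outside b -> e' a b = e a b.
Proof.
move=> /andP[au av] /andP[bu bv]; rewrite /compress /Nbar !inE.
by rewrite (negPf au) (negPf av) (negPf bu) (negPf bv) /= andbT orbF.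
Qed.

Lemma compress_u a : outside a -> e' a u = e a u && e a v.
Proof.
move=> /andP[au av]; rewrite /compress /Nbar !inE.
rewrite (negPf au) (negPf av) eqxx (negPf neq_uv) /= ?andbF ?orbF.
by case: (e a u); case: (e a v).
Qed.

Lemma compress_v a : outside a -> e' a v = e a u || e a v.
Proof.
move=> /andP[au av]; rewrite /compress /Nbar !inE.
rewrite (negPf au) (negPf av) eqxx eq_sym (negPf neq_uv) /= ?andbF ?orbF.
by case: (e a u); case: (e a v).
Qed.

Lemma compress_uv : e' u v.
Proof. by rewrite /compress euv /Nbar !inE !eqxx /= !andbF. Qed.

Lemma compress_sym : symmetric e'.
Proof.
move=> x y; rewrite /compress esym.
by case: (x == u); case: (y == u); case: (x == v); case: (y == v);
   case: (x \in _); case: (y \in _); rewrite /= ?orbF ?andbF ?orbT.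
Qed.

Lemma compress_irr : irreflexive e'.
Proof.
move=> x; rewrite /compress eirr /Nbar inE.
by case: (x =P v) => [->|_]; rewrite ?eqxx ?andbF.
Qed.

Lemma simple_graph_compress : simple_graph e'.
Proof. by split; [apply: compress_sym | apply: compress_irr]. Qed.

Lemma card_Nbar_uv : #|Nbar e u v| = (\sum_(b | outside b) (e b u && ~~ e b v))%N.
Proof.
rewrite -sum1_card big_mkcond /= sum_split_uv !inE !eqxx /= andbF !add0n.
by apply: eq_bigr => b outb; rewrite inE outb; case: (e b u); case: (e b v).
Qed.

Lemma card_Nbar_vu : #|Nbar e v u| = (\sum_(b | outside b) (~~ e b u && e b v))%N.
Proof.
rewrite -sum1_card big_mkcond /= sum_split_uv !inE !eqxx /= andbF add0n.
apply: eq_bigr => b /andP[bu bv]; rewrite inE bu bv /=.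
by case: (e b u); case: (e b v).
Qed.

Lemma walks2_u c : outside c ->
  walks2 e u c = (e c v + \sum_(b | outside b) e b u * e b c)%N.
Proof.
move=> outc; rewrite /walks2 sum_split_uv eirr euv (esym v c) add0n mul1n.
by congr (_ + _)%N; apply: eq_bigr => b _; rewrite esym.
Qed.

Lemma walks2_v c : outside c ->
  walks2 e v c = (e c u + \sum_(b | outside b) e b v * e b c)%N.
Proof.
move=> outc; rewrite /walks2 sum_split_uv eirr (esym v u) euv (esym u c) addn0 mul1n.
by congr (_ + _)%N; apply: eq_bigr => b _; rewrite esym.
Qed.

Lemma walks2_compress_u c : outside c ->
  walks2 e' u c = ((e c u || e c v)
                   + \sum_(b | outside b) (e b u && e b v) * e b c)%N.
Proof.
move=> outc; rewrite /walks2 sum_split_uv compress_irr compress_uv.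
rewrite (compress_sym v c) (compress_v outc) add0n mul1n.
congr (_ + _)%N; apply: eq_bigr => b outb.
by rewrite (compress_sym u b) (compress_u outb) (compress_outside outb outc).
Qed.

Lemma walks2_compress_v c : outside c ->
  walks2 e' v c = ((e c u && e c v)
                   + \sum_(b | outside b) (e b u || e b v) * e b c)%N.
Proof.
move=> outc; rewrite /walks2 sum_split_uv compress_irr (compress_sym v u).
rewrite compress_uv (compress_sym u c) (compress_u outc) addn0 mul1n.
congr (_ + _)%N; apply: eq_bigr => b outb.
by rewrite (compress_sym v b) (compress_v outb) (compress_outside outb outc).
Qed.

Lemma walks2_outside_le a c : outside a -> outside c ->
  (walks2 e a c <= walks2 e' a c)%N.
Proof.
move=> outa outc; rewrite /walks2 !sum_split_uv -!addnA.
have -> : (\sum_(b | outside b) e' a b * e' b c =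
           \sum_(b | outside b) e a b * e b c)%N.
  by apply: eq_bigr => b outb; rewrite !compress_outside.
rewrite !addnA leq_add2r (compress_u outa) (compress_v outa).
rewrite (compress_sym u c) (compress_u outc) (compress_sym v c).
by rewrite (compress_v outc) (esym u c) (esym v c) walks_through_pair_le.
Qed.

Lemma walks2_corner_le :
  (walks2 e u u ^ 2 + walks2 e u v ^ 2 + walks2 e v u ^ 2 + walks2 e v v ^ 2
     + 2 * #|Nbar e u v| * #|Nbar e v u|
   <= walks2 e' u u ^ 2 + walks2 e' u v ^ 2 + walks2 e' v u ^ 2 + walks2 e' v v ^ 2)%N.
Proof.
rewrite card_Nbar_uv card_Nbar_vu /walks2 !sum_split_uv !eirr !compress_irr.
rewrite (compress_sym v u) compress_uv (esym v u) euv.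
set A := (\sum_(b | outside b) (e b u && e b v))%N.
set P := (\sum_(b | outside b) (e b u && ~~ e b v))%N.
set K := (\sum_(b | outside b) (~~ e b u && e b v))%N.
have -> : (\sum_(b | outside b) e u b * e b u = A + P)%N.
  rewrite -big_split; apply: eq_bigr => b _; rewrite (esym u b).
  by case: (e b u); case: (e b v).
have -> : (\sum_(b | outside b) e v b * e b v = A + K)%N.
  rewrite -big_split; apply: eq_bigr => b _; rewrite (esym v b).
  by case: (e b u); case: (e b v).
have -> : (\sum_(b | outside b) e u b * e b v = A)%N.
  by apply: eq_bigr => b _; rewrite (esym u b); case: (e b u); case: (e b v).
have -> : (\sum_(b | outside b) e v b * e b u = A)%N.
  by apply: eq_bigr => b _; rewrite (esym v b); case: (e b u); case: (e b v).
have -> : (\sum_(b | outside b) e' u b * e' b u = A)%N.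
  apply: eq_bigr => b outb; rewrite (compress_sym u b) (compress_u outb).
  by case: (e b u); case: (e b v).
have -> : (\sum_(b | outside b) e' v b * e' b v = A + P + K)%N.
  rewrite -!big_split; apply: eq_bigr => b outb.
  by rewrite (compress_sym v b) (compress_v outb); case: (e b u); case: (e b v).
have -> : (\sum_(b | outside b) e' u b * e' b v = A)%N.
  apply: eq_bigr => b outb; rewrite (compress_sym u b) (compress_u outb).
  by rewrite (compress_v outb); case: (e b u); case: (e b v).
have -> : (\sum_(b | outside b) e' v b * e' b u = A)%N.
  apply: eq_bigr => b outb; rewrite (compress_sym v b) (compress_u outb).
  by rewrite (compress_v outb); case: (e b u); case: (e b v).
nia.
Qed.

Lemma closed_walks2_compress : closed_walks2 e' = closed_walks2 e.
Proof.
rewrite /closed_walks2 !sum2_split_uv !compress_irr !eirr compress_uv.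
rewrite (compress_sym v u) compress_uv euv (esym v u) euv.
congr (_ + _ + _ + _)%N.
- apply: eq_bigr => c outc; rewrite (compress_sym u c) (compress_u outc).
  rewrite (compress_sym v c) (compress_v outc) (esym u c) (esym v c).
  by case: (e c u); case: (e c v).
- apply: eq_bigr => a outa; rewrite (compress_u outa) (compress_v outa).
  by case: (e a u); case: (e a v).
- apply: eq_bigr => a outa; apply: eq_bigr => c outc.
  by rewrite compress_outside.
Qed.

Lemma Nbar_pair_four_le (x y : 'I_n) :
  x \in Nbar e u v -> y \in Nbar e v u -> (4 <= n)%N.
Proof.
rewrite !inE => /andP[/andP[/andP[xu xv] _] nxv] /andP[/andP[/andP[yv yu] eyv] _].
have xy : x != y by apply: contraNneq nxv => ->; apply: eyv.
have uniq_s : uniq [:: x; y; u; v] by rewrite /= !inE !negb_or xy xu xv yu yv neq_uv.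
by rewrite -[n]card_ord -[4%N]/(size [:: x; y; u; v]) -(card_uniqP uniq_s) max_card.
Qed.

Hypothesis no_edge_Nbar : forall x y, x \in Nbar e u v -> y \in Nbar e v u -> ~~ e x y.

Lemma walks2_row_le c : outside c ->
  (walks2 e u c ^ 2 + walks2 e v c ^ 2 <= walks2 e' u c ^ 2 + walks2 e' v c ^ 2)%N.
Proof.
move=> outc; rewrite walks2_u ?walks2_v ?walks2_compress_u ?walks2_compress_v //.
set A := (\sum_(b | outside b) (e b u && e b v) * e b c)%N.
set P := (\sum_(b | outside b) (e b u && ~~ e b v) * e b c)%N.
set K := (\sum_(b | outside b) (~~ e b u && e b v) * e b c)%N.
have -> : (\sum_(b | outside b) e b u * e b c = A + P)%N.
  rewrite -big_split; apply: eq_bigr => b _.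
  by case: (e b u); case: (e b v); case: (e b c).
have -> : (\sum_(b | outside b) e b v * e b c = A + K)%N.
  rewrite -big_split; apply: eq_bigr => b _.
  by case: (e b u); case: (e b v); case: (e b c).
have -> : (\sum_(b | outside b) (e b u || e b v) * e b c = A + P + K)%N.
  rewrite -!big_split; apply: eq_bigr => b _.
  by case: (e b u); case: (e b v); case: (e b c).
apply: sqr_walks_row_le => [/andP[cu ncv] | /andP[ncu cv]].
  rewrite /K big1 // => b outb; case: (boolP (~~ e b u && e b v)) => // /andP[nbu bv].
  have Nc : c \in Nbar e u v by rewrite inE outc cu ncv.
  have Nb : b \in Nbar e v u by rewrite inE [(b != v) && _]andbC outb bv nbu.
  by rewrite esym (negPf (no_edge_Nbar Nc Nb)).
rewrite /P big1 // => b outb; case: (boolP (e b u && ~~ e b v)) => // /andP[bu nbv].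
have Nb : b \in Nbar e u v by rewrite inE outb bu nbv.
have Nc : c \in Nbar e v u by rewrite inE [(c != v) && _]andbC outc cv ncu.
by rewrite (negPf (no_edge_Nbar Nb Nc)).
Qed.

Lemma closed_walks4_compress :
  (closed_walks4 e + 2 * #|Nbar e u v| * #|Nbar e v u| <= closed_walks4 e')%N.
Proof.
rewrite /closed_walks4 !(sum2_split_uv (fun a c => walks2 _ a c ^ 2)%N).
have corner := walks2_corner_le.
have rows : (\sum_(c | outside c) (walks2 e u c ^ 2 + walks2 e v c ^ 2) <=
             \sum_(c | outside c) (walks2 e' u c ^ 2 + walks2 e' v c ^ 2))%N.
  by apply: leq_sum => c outc; apply: walks2_row_le.
have cols : (\sum_(a | outside a) (walks2 e a u ^ 2 + walks2 e a v ^ 2) <=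
             \sum_(a | outside a) (walks2 e' a u ^ 2 + walks2 e' a v ^ 2))%N.
  apply: leq_sum => a outa; rewrite !(walks2C esym a) !(walks2C compress_sym a).
  exact: walks2_row_le.
have rest : (\sum_(a | outside a) \sum_(c | outside c) walks2 e a c ^ 2 <=
             \sum_(a | outside a) \sum_(c | outside c) walks2 e' a c ^ 2)%N.
  apply: leq_sum => a outa; apply: leq_sum => c outc.
  by rewrite leq_sqr walks2_outside_le.
lia.
Qed.

Lemma a4_compress_gap :
  2 * a4 e' + (#|Nbar e u v| * #|Nbar e v u|)%:R <= 2 * a4 e.
Proof.
have [n_ge4 | n_lt4] := leqP 4 n; last first.
  suff -> : (#|Nbar e u v| * #|Nbar e v u| = 0)%N by rewrite /a4 leqNgt n_lt4.
  apply/eqP; rewrite muln_eq0 !cards_eq0; apply: contraTT n_lt4.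
  by case/norP => /set0Pn[x Nx] /set0Pn[y Ny]; rewrite -leqNgt (Nbar_pair_four_le Nx Ny).
have a4e := a4_closed_walks (conj esym eirr) n_ge4.
have a4e' := a4_closed_walks simple_graph_compress n_ge4.
rewrite closed_walks2_compress in a4e'.
have gap4 : (closed_walks4 e)%:R + 2 * (#|Nbar e u v| * #|Nbar e v u|)%:R
            <= (closed_walks4 e')%:R :> int.
  by rewrite -natrM -natrD ler_nat mulnA closed_walks4_compress.
lia.
Qed.

End Compression.

Theorem theorem3p2 (n : nat) (e : rel 'I_n) (u v : 'I_n) :
  simple_graph e ->
  e u v ->
  (* \hat E_{u,v} is empty *)
  (forall x y, x \in Nbar e u v -> y \in Nbar e v u -> ~~ e x y) ->
  a4 (compress e u v) <= a4 e /\
  (Nbar e v u != set0 -> Nbar e u v != set0 -> a4 (compress e u v) < a4 e).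
Proof.
move=> [esym eirr] euv no_edge_Nbar.
have gap := a4_compress_gap esym eirr euv no_edge_Nbar.
split; first lia.
by rewrite -!card_gt0 => Nvu Nuv; nia.
Qed.
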